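(* Let $\mathfrak{s}$ be a finite-dimensional complex solvable Lie algebra. There is a Zariski closed subset $W\subseteq\mathrm{Hom}(\mathfrak{s},\mathfrak{sl}_2)$ with $0\notin W$ such that $\mathrm{rep}(\mathfrak{s},\mathfrak{sl}_2)\subseteq\mathrm{rep}^1(\mathfrak{s},\mathfrak{sl}_2)\cup W$. In particular, $\mathrm{rep}(\mathfrak{s},\mathfrak{sl}_2)_{(0)}=\mathrm{rep}^1(\mathfrak{s},\mathfrak{sl}_2)_{(0)}$.
   Context: $\mathrm{rep}(\mathfrak{s},\mathfrak{sl}_2)\subseteq\mathrm{Hom}(\mathfrak{s},\mathfrak{sl}_2)$ is the variety of Lie algebra homomorphisms, $\mathrm{rep}^1(\mathfrak{s},\mathfrak{sl}_2)$ the subset of those of rank at most $1$, and $X_{(0)}$ the analytic germ at $0$. *)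

From HB Require Import structures.
From mathcomp Require Import all_boot all_order all_algebra.
From mathcomp Require Import complex reals.
From mathcomp Require Import mpoly.
Set Implicit Arguments. Unset Strict Implicit. Unset Printing Implicit Defensive.
Import Order.TTheory GRing.Theory Num.Theory.
Local Open Scope ring_scope.

(* A finite-dimensional Lie algebra of dimension n over a field K, given by
   its structure constants w.r.t. a basis e_0..e_(n-1):  c i j = [e_i, e_j],
   as a row vector of coordinates. *)
Definition lie_br (K : fieldType) (n : nat) (c : 'I_n -> 'I_n -> 'rV[K]_n)
  (u v : 'rV[K]_n) : 'rV[K]_n :=
  \sum_(i < n) \sum_(j < n) (u 0 i * v 0 j) *: c i j.

(* Lie algebra axioms (bilinearity is built in): alternating + Jacobi. *)
Definition is_lie_algebra (K : fieldType) (n : nat)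
  (c : 'I_n -> 'I_n -> 'rV[K]_n) : Prop :=
  (forall x, lie_br c x x = 0) /\
  (forall x y z, lie_br c x (lie_br c y z) + lie_br c y (lie_br c z x)
                 + lie_br c z (lie_br c x y) = 0).

(* Derived series, as row spaces (mxalgebra): D 0 = s,
   D (k+1) = [D k, D k] = span of brackets of the spanning rows of D k. *)
Fixpoint derived (K : fieldType) (n : nat) (c : 'I_n -> 'I_n -> 'rV[K]_n)
  (k : nat) : 'M[K]_n :=
  match k with
  | 0 => 1%:M
  | k'.+1 => let D := derived c k' in
      (\sum_(i < n) \sum_(j < n) <<lie_br c (row i D) (row j D)>>)%MS
  end.

Definition solvable_lie (K : fieldType) (n : nat)
  (c : 'I_n -> 'I_n -> 'rV[K]_n) : Prop :=
  exists k, \rank (derived c k) = 0%N.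

(* Hom(s, sl_2): a linear map is determined by the images phi i of the basis
   vectors; it lands in sl_2 = traceless 2x2 matrices. *)
Definition in_Hom_sl2 (K : fieldType) (n : nat) (phi : 'I_n -> 'M[K]_2) : Prop :=
  forall i, \tr (phi i) = 0.

Definition lin_ext (K : fieldType) (n : nat) (phi : 'I_n -> 'M[K]_2)
  (u : 'rV[K]_n) : 'M[K]_2 := \sum_(i < n) u 0 i *: phi i.

Definition in_rep (K : fieldType) (n : nat) (c : 'I_n -> 'I_n -> 'rV[K]_n)
  (phi : 'I_n -> 'M[K]_2) : Prop :=
  in_Hom_sl2 phi /\
  forall u v, lin_ext phi (lie_br c u v)
              = lin_ext phi u *m lin_ext phi v - lin_ext phi v *m lin_ext phi u.

Definition Hom_mx (K : fieldType) (n : nat) (phi : 'I_n -> 'M[K]_2)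
  : 'M[K]_(n, 2 * 2) := \matrix_(i < n) mxvec (phi i).

Definition hom_rank (K : fieldType) (n : nat) (phi : 'I_n -> 'M[K]_2) : nat :=
  \rank (Hom_mx phi).

Definition in_rep1 (K : fieldType) (n : nat) (c : 'I_n -> 'I_n -> 'rV[K]_n)
  (phi : 'I_n -> 'M[K]_2) : Prop :=
  in_rep c phi /\ (hom_rank phi <= 1)%N.

Definition hom_coords (K : fieldType) (n : nat) (phi : 'I_n -> 'M[K]_2)
  : 'I_(n * (2 * 2)) -> K := fun k => mxvec (Hom_mx phi) 0 k.

(* zero locus of a set S of polynomial functions in these coordinates;
   W = Hom(s,sl_2) /\ zero_locus S is a general Zariski closed subset. *)
Definition zero_locus (K : fieldType) (n : nat)
  (S : {mpoly K[n * (2 * 2)]} -> Prop) (phi : 'I_n -> 'M[K]_2) : Prop :=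
  forall p, S p -> p.@[hom_coords phi] = 0.

From HB Require Import structures.
From mathcomp Require Import all_boot all_order all_algebra.
From mathcomp Require Import complex reals.
From mathcomp Require Import mpoly.
From mathcomp Require Import ring.
Import Order.TTheory GRing.Theory Num.Theory.
Local Open Scope ring_scope.
Set Implicit Arguments. Unset Strict Implicit. Unset Printing Implicit Defensive.

(* For a homomorphism phi : s -> sl_2 one has ad(phi x)^2 (phi y) =
   phi (ad(x)^2 y), while in sl_2 ad(A)^2 B = 4 (-det A) B - 2 tr(AB) A.
   Hence if 4 (-det (phi x)) is not an eigenvalue of ad(x)^2, the whole image
   of phi lies on the line through phi x.  If instead -det vanishes on all
   phi e_i + phi e_j, the image is totally isotropic for the nondegenerate
   quadratic form -det on sl_2, hence again at most a line.  So for phi of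
   rank >= 2 some 4 (-det (phi e_i + phi e_j)) is a nonzero root of the
   product Q of the characteristic polynomials of ad(e_i + e_j)^2.  Dividing
   Q by its power of X gives G with G(0) <> 0, and W is the zero set of
   phi |-> prod_(i,j) G(4 (-det (phi e_i + phi e_j))), which does not vanish
   at 0, nor, by continuity, near 0. *)

Lemma mx2_ext (K : nzRingType) (A B : 'M[K]_2) :
  A 0 0 = B 0 0 -> A 0 1 = B 0 1 -> A 1 0 = B 1 0 -> A 1 1 = B 1 1 -> A = B.
Proof.
move=> h00 h01 h10 h11; apply/matrixP=> i j.
have e0 (H : (0 < 2)%N) : Ordinal H = 0 by apply: val_inj.
have e1 (H : (1 < 2)%N) : Ordinal H = 1 by apply: val_inj.
by case: i => [[|[|i]] Hi] //; case: j => [[|[|j]] Hj] //; rewrite ?e0 ?e1.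
Qed.

Lemma mxtrace2 (K : nzRingType) (A : 'M[K]_2) : \tr A = A 0 0 + A 1 1.
Proof.
by rewrite /mxtrace !big_ord_recl big_ord0 addr0; congr (A _ _ + A _ _); apply: val_inj.
Qed.

Lemma mxtrace2_eq0 (K : nzRingType) (A : 'M[K]_2) : \tr A = 0 -> A 1 1 = - A 0 0.
Proof. by rewrite mxtrace2 => /eqP; rewrite addrC addr_eq0 => /eqP. Qed.

(* [negdet2 A] is [- \det A]; for traceless [A] it is the scalar [A ^+ 2]. *)
Definition negdet2 (K : nzRingType) (A : 'M[K]_2) : K := A 0 1 * A 1 0 - A 0 0 * A 1 1.

Lemma negdet2_traceless (K : comNzRingType) (A : 'M[K]_2) :
  \tr A = 0 -> negdet2 A = A 0 0 ^+ 2 + A 0 1 * A 1 0.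
Proof. by move/mxtrace2_eq0; rewrite /negdet2 => ->; ring. Qed.

Lemma sl2_ad_sq (K : comNzRingType) (A B : 'M[K]_2) : \tr A = 0 -> \tr B = 0 ->
  A *m (A *m B - B *m A) - (A *m B - B *m A) *m A
  = (4 * negdet2 A) *: B - (2 * \tr (A *m B)) *: A.
Proof.
move=> /mxtrace2_eq0 eA /mxtrace2_eq0 eB.
have o0 : (ord0 : 'I_2) = 0 by apply: val_inj.
have o1 : (lift ord0 (ord0 : 'I_1) : 'I_2) = 1 by apply: val_inj.
apply: mx2_ext; rewrite !mxE /negdet2 mxtrace2 !mxE !big_ord_recl !big_ord0 !mxE;
  rewrite !big_ord_recl !big_ord0 /= ?o0 ?o1 eA eB; ring.
Qed.

Lemma norm_negdet2_le (K : numDomainType) (A : 'M[K]_2) (m : K) :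
  (forall a b, `|A a b| <= m) -> `|negdet2 A| <= 2 * m ^+ 2.
Proof.
move=> Am; have m_ge0 : 0 <= m by apply: le_trans (Am 0 0).
have prod_le a b a' b' : `|A a b * A a' b'| <= m ^+ 2 by rewrite normrM ler_pM.
by apply: le_trans (ler_normB _ _) _; rewrite mulr2n mulrDl mul1r lerD.
Qed.

Section LinearExtension.
Variables (K : fieldType) (n : nat) (phi : 'I_n -> 'M[K]_2).

Lemma lin_extD u v : lin_ext phi (u + v) = lin_ext phi u + lin_ext phi v.
Proof. by rewrite /lin_ext -big_split; apply: eq_bigr => i _; rewrite mxE scalerDl. Qed.

Lemma lin_extZ a u : lin_ext phi (a *: u) = a *: lin_ext phi u.
Proof. by rewrite /lin_ext scaler_sumr; apply: eq_bigr => i _; rewrite mxE scalerA. Qed.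

Lemma lin_extB u v : lin_ext phi (u - v) = lin_ext phi u - lin_ext phi v.
Proof. by rewrite lin_extD -scaleN1r lin_extZ scaleN1r. Qed.

Lemma lin_ext_delta i : lin_ext phi (delta_mx 0 i) = phi i.
Proof.
rewrite /lin_ext (bigD1 i) //= big1 ?addr0 => [|j ji].
  by rewrite mxE !eqxx scale1r.
by rewrite mxE eqxx /=; case: eqP ji => [->|]; rewrite ?eqxx ?scale0r.
Qed.

Lemma mxtrace_lin_ext u : in_Hom_sl2 phi -> \tr (lin_ext phi u) = 0.
Proof.
move=> Hsl2; rewrite /lin_ext; apply: (big_ind (fun A : 'M[K]_2 => \tr A = 0)).
- exact: mxtrace0.
- by move=> A B hA hB; rewrite mxtraceD hA hB addr0.
- by move=> i _; rewrite mxtraceZ Hsl2 mulr0.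
Qed.

Lemma hom_rank_le1 (A : 'M[K]_2) :
  (forall i, exists a, phi i = a *: A) -> (hom_rank phi <= 1)%N.
Proof.
move=> Hphi; have sub_A : (Hom_mx phi <= mxvec A)%MS.
  apply/row_subP => i; have [a eA] := Hphi i.
  by rewrite /Hom_mx rowK eA linearZ /= scalemx_sub.
exact: leq_trans (mxrankS sub_A) (rank_leq_row _).
Qed.

End LinearExtension.

Definition ad_mx (K : fieldType) (n : nat) (c : 'I_n -> 'I_n -> 'rV[K]_n)
  (u : 'rV[K]_n) : 'M[K]_n := \matrix_(j, k) (\sum_i u 0 i *: c i j) 0 k.

Lemma lie_br_ad_mx (K : fieldType) (n : nat) (c : 'I_n -> 'I_n -> 'rV[K]_n) u v :
  lie_br c u v = v *m ad_mx c u.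
Proof.
rewrite /lie_br exchange_big mulmx_sum_row; apply: eq_bigr => j _.
have -> : row j (ad_mx c u) = \sum_i u 0 i *: c i j by apply/rowP=> k; rewrite !mxE.
by rewrite scaler_sumr; apply: eq_bigr => i _; rewrite scalerA mulrC.
Qed.

Lemma rep_rank_gt1_eigenvalue (K : fieldType) (n : nat)
  (c : 'I_n -> 'I_n -> 'rV[K]_n) (phi : 'I_n -> 'M[K]_2) :
  in_rep c phi -> (1 < hom_rank phi)%N -> forall x,
  root (char_poly (ad_mx c x *m ad_mx c x)) (4 * negdet2 (lin_ext phi x)).
Proof.
move=> [Hsl2 Hhom] Hrk x; set A := lin_ext phi x; set t := 4 * negdet2 A.
set M := ad_mx c x *m ad_mx c x.
apply/negPn/negP => Hnr.
have Hu : (M - t%:M) \in unitmx.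
  rewrite -row_free_unit -kermx_eq0.
  by move: Hnr; rewrite -eigenvalue_root_char /eigenvalue /eigenspace negbK.
suff : (hom_rank phi <= 1)%N by rewrite leqNgt Hrk.
apply: (hom_rank_le1 (A := A)) => i.
pose z : 'rV_n := delta_mx 0 i *m invmx (M - t%:M).
exists (- (2 * \tr (A *m lin_ext phi z))).
have ez : z *m (M - t%:M) = delta_mx 0 i by rewrite /z mulmxKV.
rewrite -lin_ext_delta -ez mulmxBr mul_mx_scalar lin_extB lin_extZ.
rewrite /M mulmxA -!lie_br_ad_mx !Hhom -/A sl2_ad_sq ?mxtrace_lin_ext //.
by rewrite -/t addrAC subrr add0r scaleNr.
Qed.

Section Isotropic.
Variable K : fieldType.
Hypothesis two_neq0 : (2 : K) != 0.

Lemma proportional3 (a b c a' b' c' : K) :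
  [|| a != 0, b != 0 | c != 0] ->
  a * b' = a' * b -> a * c' = a' * c -> b * c' = b' * c ->
  exists l, [/\ a' = l * a, b' = l * b & c' = l * c].
Proof.
case/or3P => [ha|hb|hc] e1 e2 e3.
- exists (a' / a); split; first by field.
  + by apply: (mulfI ha); rewrite e1; field.
  + by apply: (mulfI ha); rewrite e2; field.
- exists (b' / b); split.
  + by apply: (mulfI hb); rewrite mulrC -e1; field.
  + by field.
  + by apply: (mulfI hb); rewrite e3; field.
- exists (c' / c); split; last by field.
  + by apply: (mulfI hc); rewrite mulrC -e2; field.
  + by apply: (mulfI hc); rewrite mulrC -e3; field.
Qed.

(* The square of each minor is a combination of the three hypotheses. *)
Lemma isotropic_minors (a b c a' b' c' : K) :
  a ^+ 2 + b * c = 0 -> a' ^+ 2 + b' * c' = 0 -> 2 * a * a' + b * c' + b' * c = 0 ->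
  [/\ a * b' = a' * b, a * c' = a' * c & b * c' = b' * c].
Proof.
move=> q1 q2 b12; have sq0 (x : K) : x ^+ 2 = 0 -> x = 0 by move/eqP; rewrite sqrf_eq0 => /eqP.
have m1 : a * b' = a' * b.
  apply/eqP; rewrite -subr_eq0; apply/eqP/sq0.
  have -> : (a * b' - a' * b) ^+ 2 = b' ^+ 2 * (a ^+ 2 + b * c)
    + b ^+ 2 * (a' ^+ 2 + b' * c') - b * b' * (2 * a * a' + b * c' + b' * c) by ring.
  by rewrite q1 q2 b12; ring.
have m2 : a * c' = a' * c.
  apply/eqP; rewrite -subr_eq0; apply/eqP/sq0.
  have -> : (a * c' - a' * c) ^+ 2 = c' ^+ 2 * (a ^+ 2 + b * c)
    + c ^+ 2 * (a' ^+ 2 + b' * c') - c * c' * (2 * a * a' + b * c' + b' * c) by ring.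
  by rewrite q1 q2 b12; ring.
split=> //; apply/eqP; rewrite -subr_eq0; apply/eqP/sq0.
have -> : (b * c' - b' * c) ^+ 2 = (2 * a * a' + b * c' + b' * c) ^+ 2
  - 4 * (a ^+ 2 + b * c) * (a' ^+ 2 + b' * c')
  + 4 * (a * b' - a' * b) * (a * c' - a' * c) by ring.
by rewrite q1 q2 b12 m1 m2 !subrr; ring.
Qed.

Lemma isotropic_hom_rank_le1 (n : nat) (phi : 'I_n -> 'M[K]_2) :
  in_Hom_sl2 phi -> (forall i j, negdet2 (phi i + phi j) = 0) ->
  (hom_rank phi <= 1)%N.
Proof.
move=> Hsl2 Hiso.
have e11 i : phi i 1 1 = - phi i 0 0 by apply: mxtrace2_eq0.
have isoE i j : (phi i 0 0 + phi j 0 0) ^+ 2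
    + (phi i 0 1 + phi j 0 1) * (phi i 1 0 + phi j 1 0) = 0.
  by rewrite -(Hiso i j) negdet2_traceless ?mxtraceD ?Hsl2 ?addr0 // !mxE.
have q i : phi i 0 0 ^+ 2 + phi i 0 1 * phi i 1 0 = 0.
  apply: (mulfI (mulf_neq0 two_neq0 two_neq0)); rewrite mulr0 -(isoE i i); ring.
have b i j : 2 * phi i 0 0 * phi j 0 0 + phi i 0 1 * phi j 1 0
    + phi j 0 1 * phi i 1 0 = 0.
  apply: etrans (isoE i j); rewrite -[LHS]addr0 -(q i) -[LHS]addr0 -(q j); ring.
have [k Hk | phi0] := pickP (fun k => phi k != 0); last first.
  by apply: (hom_rank_le1 (A := 0)) => i; exists 0; rewrite scale0r; apply/eqP/negbFE/phi0.
apply: (hom_rank_le1 (A := phi k)) => i.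
have nz : [|| phi k 0 0 != 0, phi k 0 1 != 0 | phi k 1 0 != 0].
  apply: contraR Hk; rewrite !negb_or !negbK => /and3P [/eqP h0 /eqP h1 /eqP h2].
  by apply/eqP/mx2_ext; rewrite !mxE ?e11 ?h0 ?h1 ?h2 ?oppr0.
have [m1 m2 m3] := isotropic_minors (q k) (q i) (b k i).
have [l [h0 h1 h2]] := proportional3 nz m1 m2 m3.
by exists l; apply: mx2_ext; rewrite !mxE ?e11 // h0; ring.
Qed.

End Isotropic.

Lemma poly_divX_roots (K : idomainType) (q : {poly K}) : q != 0 ->
  exists2 g : {poly K}, g.[0] != 0 & forall t, t != 0 -> root q t -> root g t.
Proof.
move=> q_neq0; have [m [g g0 Dq]] := multiplicity_XsubC q 0.
exists g => [|t t_neq0]; first by move: g0; rewrite q_neq0 rootE.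
rewrite Dq rootE hornerM horner_exp hornerXsubC subr0 mulf_eq0 expf_eq0.
by rewrite (negbTE t_neq0) andbF orbF.
Qed.

Lemma norm_horner_le (K : numDomainType) (h : {poly K}) (t : K) :
  `|t| <= 1 -> `|h.[t]| <= \sum_(i < size h) `|h`_i|.
Proof.
move=> t_le1; rewrite horner_coef; apply: le_trans (ler_norm_sum _ _ _) _.
apply: ler_sum => i _; rewrite normrM normrX; apply: ler_piMr => //.
exact: exprn_ile1.
Qed.

Lemma poly_neq0_near0 (K : numFieldType) (g : {poly K}) : g.[0] != 0 ->
  exists d : K, [/\ 0 < d, d <= 1 & forall t, `|t| < d -> g.[t] != 0].
Proof.
move=> g0; have /factor_theorem [h Dg] : root (g - g.[0]%:P) 0.
  by rewrite rootE hornerD hornerN hornerC subrr.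
have gE t : g.[t] = g.[0] + h.[t] * t.
  by rewrite -{1}[g](subrK g.[0]%:P) Dg hornerD hornerM hornerXsubC hornerC subr0 addrC.
pose C := \sum_(i < size h) `|h`_i|.
have C_ge0 : 0 <= C by apply: sumr_ge0.
have g0_gt0 : 0 < `|g.[0]| by rewrite normr_gt0.
have Cg0_gt0 : 0 < C + `|g.[0]| by apply: ltr_wpDl.
exists (`|g.[0]| / (C + `|g.[0]|)); split.
- exact: divr_gt0.
- by rewrite ler_pdivrMr // mul1r lerDr.
move=> t; rewrite ltr_pdivlMr // mulrDr => t_small.
have t_lt1 : `|t| < 1.
  rewrite -(ltr_pM2r g0_gt0) mul1r; apply: le_lt_trans t_small.
  by rewrite lerDr mulr_ge0.
apply/negP => /eqP gt0.
have g0_le : `|g.[0]| <= `|t| * C.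
  have -> : g.[0] = - (h.[t] * t) by apply/eqP; rewrite -subr_eq0 opprK -gE gt0.
  by rewrite normrN normrM mulrC ler_wpM2l // norm_horner_le // ltW.
have le_small : `|t| * C <= `|t| * C + `|t| * `|g.[0]| by rewrite lerDl mulr_ge0.
by have := le_lt_trans g0_le (le_lt_trans le_small t_small); rewrite ltxx.
Qed.

Section PairEigenvalues.
Variables (K : numFieldType) (n : nat) (c : 'I_n -> 'I_n -> 'rV[K]_n).

Definition pair_vec (p : 'I_n * 'I_n) : 'rV[K]_n := delta_mx 0 p.1 + delta_mx 0 p.2.

Definition ad_sq_char_poly : {poly K} :=
  \prod_p char_poly (ad_mx c (pair_vec p) *m ad_mx c (pair_vec p)).

Lemma ad_sq_char_poly_neq0 : ad_sq_char_poly != 0.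
Proof. by apply/prodf_neq0 => p _; apply/monic_neq0/char_poly_monic. Qed.

Definition pair_eigen (phi : 'I_n -> 'M[K]_2) (p : 'I_n * 'I_n) : K :=
  4 * negdet2 (phi p.1 + phi p.2).

Lemma rep_rank_gt1_pair_eigen (phi : 'I_n -> 'M[K]_2) :
  in_rep c phi -> (1 < hom_rank phi)%N ->
  exists2 p, pair_eigen phi p != 0 & root ad_sq_char_poly (pair_eigen phi p).
Proof.
move=> Hrep Hrk.
have [p Hp | iso] := pickP (fun p : 'I_n * 'I_n => negdet2 (phi p.1 + phi p.2) != 0).
  exists p; first by rewrite mulf_neq0 ?pnatr_eq0.
  have := rep_rank_gt1_eigenvalue Hrep Hrk (pair_vec p).
  rewrite /pair_vec lin_extD !lin_ext_delta => root_p.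
  by rewrite rootE horner_prod; apply/prodf_eq0; exists p.
have : (hom_rank phi <= 1)%N.
  apply: isotropic_hom_rank_le1; [by rewrite pnatr_eq0 | by case: Hrep |].
  by move=> i j; apply/eqP/negbFE/(iso (i, j)).
by rewrite leqNgt Hrk.
Qed.

Definition entry_mpoly (i : 'I_n) (a b : 'I_2) : {mpoly K[n * (2 * 2)]} :=
  'X_(mxvec_index i (mxvec_index a b)).

Lemma meval_entry_mpoly (phi : 'I_n -> 'M[K]_2) i a b :
  (entry_mpoly i a b).@[hom_coords phi] = phi i a b.
Proof. by rewrite mevalXU /hom_coords mxvecE /Hom_mx mxE mxvecE. Qed.

Definition pair_eigen_mpoly (p : 'I_n * 'I_n) : {mpoly K[n * (2 * 2)]} :=
  let E a b := entry_mpoly p.1 a b + entry_mpoly p.2 a b in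
  4 * (E 0 1 * E 1 0 - E 0 0 * E 1 1).

Lemma meval_pair_eigen_mpoly phi p :
  (pair_eigen_mpoly p).@[hom_coords phi] = pair_eigen phi p.
Proof.
rewrite mevalM mevalB !mevalM !mevalD !meval_entry_mpoly meval1 /pair_eigen /negdet2 !mxE; ring.
Qed.

Definition obstruction_mpoly (G : {poly K}) : {mpoly K[n * (2 * 2)]} :=
  \prod_p (map_poly (@mpolyC _ K) G).[pair_eigen_mpoly p].

Lemma meval_obstruction_mpoly G phi :
  (obstruction_mpoly G).@[hom_coords phi] = \prod_p G.[pair_eigen phi p].
Proof.
rewrite rmorph_prod; apply: eq_bigr => p _.
rewrite -horner_map /= -map_poly_comp meval_pair_eigen_mpoly.
by rewrite (eq_map_poly (fun a => mevalC _ a)) map_poly_id.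
Qed.

End PairEigenvalues.

Lemma norm_pair_eigen_le (K : numFieldType) (n : nat) (phi : 'I_n -> 'M[K]_2) e p :
  (forall i a b, `|phi i a b| < e) -> `|pair_eigen phi p| <= 32 * e ^+ 2.
Proof.
move=> phi_small; have sum_le a b : `|(phi p.1 + phi p.2) a b| <= 2 * e.
  by rewrite mxE mulr2n mulrDl mul1r (le_trans (ler_normD _ _)) // lerD ?ltW.
rewrite /pair_eigen normrM ger0_norm ?ler0n //.
have -> : 32 * e ^+ 2 = 4 * (2 * (2 * e) ^+ 2) by ring.
by rewrite ler_pM2l ?ltr0n // norm_negdet2_le.
Qed.

Section Obstruction.
Variables (K : numFieldType) (n : nat) (c : 'I_n -> 'I_n -> 'rV[K]_n) (G : {poly K}).
Hypothesis G0_neq0 : G.[0] != 0.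
Hypothesis ad_sq_root : forall t, t != 0 -> root (ad_sq_char_poly c) t -> root G t.

Lemma rep_rank_gt1_obstruction phi : in_rep c phi -> (1 < hom_rank phi)%N ->
  exists2 p, pair_eigen phi p != 0 & root G (pair_eigen phi p).
Proof.
move=> Hrep Hrk; have [p p_neq0 root_p] := rep_rank_gt1_pair_eigen Hrep Hrk.
by exists p; last apply: ad_sq_root.
Qed.

Lemma rep_sub_rep1_or_obstruction phi : in_rep c phi ->
  in_rep1 c phi \/ (obstruction_mpoly n G).@[hom_coords phi] = 0.
Proof.
move=> Hrep; have [Hrk | Hrk] := leqP (hom_rank phi) 1; first by left.
right; have [p _ root_p] := rep_rank_gt1_obstruction Hrep Hrk.
by rewrite meval_obstruction_mpoly; apply/eqP/prodf_eq0; exists p.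
Qed.

Lemma meval_obstruction_mpoly0 :
  (obstruction_mpoly n G).@[hom_coords (fun _ : 'I_n => 0 : 'M[K]_2)] != 0.
Proof.
rewrite meval_obstruction_mpoly; apply/prodf_neq0 => p _.
by rewrite /pair_eigen /negdet2 !mxE !addr0 !mulr0 subrr mulr0.
Qed.

Lemma rep_eq_rep1_near0 : exists eps : K, 0 < eps /\
  forall phi : 'I_n -> 'M[K]_2, (forall i a b, `|phi i a b| < eps) ->
  (in_rep c phi <-> in_rep1 c phi).
Proof.
have [d [d_gt0 d_le1 G_neq0]] := poly_neq0_near0 G0_neq0.
have d32_gt0 : 0 < d / 32 by rewrite divr_gt0 ?ltr0n.
exists (d / 32); split=> // phi phi_small; split=> [Hrep|[]//]; split=> //.
rewrite leqNgt; apply/negP => /(rep_rank_gt1_obstruction Hrep) [p _ root_p].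
suff /G_neq0 : `|pair_eigen phi p| < d by rewrite -rootE root_p.
apply: le_lt_trans (norm_pair_eigen_le p phi_small) _.
have -> : 32 * (d / 32) ^+ 2 = d * (d / 32) by field.
rewrite -[ltRHS]mulr1 ltr_pM2l // ltr_pdivrMr ?ltr0n // mul1r.
by rewrite (le_lt_trans d_le1) ?ltr1n.
Qed.

End Obstruction.

Theorem lemma4p3 (R : realType) (n : nat) (c : 'I_n -> 'I_n -> 'rV[R[i]]_n)
  (Hlie : is_lie_algebra c) (Hsolv : solvable_lie c) :
  (exists S : {mpoly R[i][n * (2 * 2)]} -> Prop,
     (* W := Hom(s,sl_2) /\ V(S) is Zariski closed, and 0 \notin W *)
     ~ zero_locus S (fun _ : 'I_n => (0 : 'M[R[i]]_2)) /\
     (* rep(s,sl_2) \subseteq rep^1(s,sl_2) \cup W *)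
     (forall phi : 'I_n -> 'M[R[i]]_2,
        in_rep c phi -> in_rep1 c phi \/ (in_Hom_sl2 phi /\ zero_locus S phi)))
  /\
  (* germs at 0 coincide: rep and rep^1 agree on a neighbourhood of 0 *)
  (exists eps : R[i], 0 < eps /\
     forall phi : 'I_n -> 'M[R[i]]_2,
       (forall i a b, `|phi i a b| < eps) ->
       (in_rep c phi <-> in_rep1 c phi)).
Proof.
have [G G0_neq0 ad_sq_root] := poly_divX_roots (ad_sq_char_poly_neq0 c).
split; last exact: rep_eq_rep1_near0 G0_neq0 ad_sq_root.
exists (fun P => P = obstruction_mpoly n G); split.
  by move=> /(_ _ erefl) /eqP; apply/negP/meval_obstruction_mpoly0.
move=> phi Hrep; have [|W_phi] := rep_sub_rep1_or_obstruction ad_sq_root Hrep; first by left.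
by right; split=> [|_ ->]; first by case: Hrep.
Qed.
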